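(* Let $X$ be a finite semi-permutation, and let $X'\subseteq X$ be any point set obtained from $X$ by repeatedly removing redundant points. Let $Y$ be any feasible solution for $X'$ such that every point of $Y$ lies on a row that is active for $X'$. Then $Y$ is also a feasible solution for $X$.
   Context: Points have integer coordinates. Two points are collinear if they share an $x$- or $y$-coordinate; for non-collinear $p,q$, $\square_{p,q}$ is the smallest closed axis-parallel rectangle containing both; the pair is satisfied in $S$ if some $r\in S\setminus\{p,q\}$ lies in $\square_{p,q}$; $S$ is satisfied if all its non-collinear pairs are. A row is active for $X$ if it contains a point of $X$; $X$ is a semi-permutation if each active row contains exactly one point of $X$. $Y$ is a feasible solution for $X$ if $X\cup Y$ is satisfied. Writing a semi-permutation as $X=\{p_1,\dots,p_m\}$ with $p_1.y<\dots<p_m.y$, a point $p_i$ (with $1<i<m$) is redundant if $p_{i-1}.x=p_i.x=p_{i+1}.x$; ''repeatedly removing redundant points'' means iteratively deleting a point that is redundant in the current set. *)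

From Stdlib Require Import ZArith List Relations.
Open Scope Z_scope.

Definition pt : Type := (Z * Z)%type.
Definition px (p : pt) : Z := fst p.
Definition py (p : pt) : Z := snd p.

Definition ptset : Type := pt -> Prop.

Definition union (A B : ptset) : ptset := fun p => A p \/ B p.

Definition finite_set (S : ptset) : Prop :=
  exists l : list pt, forall p, S p <-> In p l.

Definition collinear (p q : pt) : Prop := px p = px q \/ py p = py q.

Definition in_rect (p q r : pt) : Prop :=
  Z.min (px p) (px q) <= px r <= Z.max (px p) (px q) /\
  Z.min (py p) (py q) <= py r <= Z.max (py p) (py q).

Definition pair_satisfied (S : ptset) (p q : pt) : Prop :=
  exists r, S r /\ r <> p /\ r <> q /\ in_rect p q r.

Definition satisfied (S : ptset) : Prop :=
  forall p q, S p -> S q -> ~ collinear p q -> pair_satisfied S p q.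

Definition active_row (X : ptset) (y : Z) : Prop := exists p, X p /\ py p = y.

Definition semi_permutation (X : ptset) : Prop :=
  forall p q, X p -> X q -> py p = py q -> p = q.

Definition feasible (X Y : ptset) : Prop := satisfied (union X Y).

(* p is redundant in S: its predecessor a and successor b in row order
   (no point of S on a row strictly between) exist and share p's column. *)
Definition redundant (S : ptset) (p : pt) : Prop :=
  S p /\
  exists a b, S a /\ S b /\ py a < py p < py b /\
    (forall r, S r -> ~ (py a < py r < py p)) /\
    (forall r, S r -> ~ (py p < py r < py b)) /\
    px a = px p /\ px p = px b.

Definition remove_step (S S' : ptset) : Prop :=
  exists p, redundant S p /\ forall q, S' q <-> (S q /\ q <> p).

Definition obtained_by_removals (X X' : ptset) : Prop :=
  clos_refl_trans ptset remove_step X X'.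

(* When a redundant point p is put back, a pair not
   involving p is still satisfied by its old witness.  A pair (p, q) is
   satisfied by the neighbour of p in column px p (the previous or next
   point of the set in row order) on q's side: q lies on an active row, and
   no active row lies strictly between p and that neighbour, so the
   neighbour's row is between those of p and q. *)
From Pilot Require Import Defs.
From Stdlib Require Import ZArith Relations Lia Classical.

Lemma in_rect_sym (p q r : pt) : in_rect p q r -> in_rect q p r.
Proof. unfold in_rect; lia. Qed.

Lemma pair_satisfied_sym (S : ptset) (p q : pt) :
  pair_satisfied S p q -> pair_satisfied S q p.
Proof.
  intros (r & Sr & rp & rq & Hr).
  exists r; auto using in_rect_sym.
Qed.

Lemma pair_satisfied_mono (S T : ptset) (p q : pt) :
  (forall r, S r -> T r) -> pair_satisfied S p q -> pair_satisfied T p q.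
Proof. intros ST (r & Sr & Hr). exists r; auto. Qed.

Lemma active_row_mono (S T : ptset) (y : Z) :
  (forall r, S r -> T r) -> active_row S y -> active_row T y.
Proof. intros ST (r & Sr & Hr). exists r; auto. Qed.

Lemma redundant_pair_satisfied (S : ptset) (p q : pt) :
  redundant S p -> active_row S (py q) -> ~ collinear p q ->
  pair_satisfied S p q.
Proof.
  intros (_ & a & b & Sa & Sb & Hab & gap_a & gap_b & xa & xb) (s & Ss & ys) Hpq.
  assert (Hy : py q <> py p) by (intro; apply Hpq; right; auto).
  assert (Hx : px q <> px p) by (intro; apply Hpq; left; auto).
  destruct (Z_lt_ge_dec (py q) (py p)) as [below | above].
  - assert (py q <= py a) by (apply Z.nlt_ge; intro; apply (gap_a s Ss); lia).
    exists a; repeat split; auto;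
      [intros <-; lia | intros <-; lia | unfold in_rect; lia..].
  - assert (py b <= py q) by (apply Z.nlt_ge; intro; apply (gap_b s Ss); lia).
    exists b; repeat split; auto;
      [intros <-; lia | intros <-; lia | unfold in_rect; lia..].
Qed.

Lemma remove_step_subset (S S' : ptset) :
  remove_step S S' -> forall q, S' q -> S q.
Proof. intros (p & _ & HS') q Hq. apply HS' in Hq. tauto. Qed.

Lemma removals_subset (X X' : ptset) :
  obtained_by_removals X X' -> forall q, X' q -> X q.
Proof.
  induction 1 as [S S' Hstep | | ]; intros q Hq; auto.
  exact (remove_step_subset S S' Hstep q Hq).
Qed.

Lemma remove_step_feasible (S S' Y : ptset) :
  remove_step S S' -> (forall q, Y q -> active_row S' (py q)) ->
  feasible S' Y -> feasible S Y.
Proof.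
  intros Hstep HY Hsat q1 q2 H1 H2 Hnc.
  pose proof (remove_step_subset S S' Hstep) as Hsub.
  destruct Hstep as (p & Hp & HS').
  assert (active : forall q, Defs.union S Y q -> active_row S (py q)).
  { intros q [Sq | Yq]; [now exists q |].
    eapply active_row_mono; eauto. }
  assert (Hp_pair : forall q, Defs.union S Y q -> ~ collinear p q ->
                    pair_satisfied (Defs.union S Y) p q).
  { intros q Hq Hpq. apply (pair_satisfied_mono S);
      [intros r Sr; now left | apply redundant_pair_satisfied; auto]. }
  assert (back : forall q, Defs.union S Y q -> q <> p -> Defs.union S' Y q).
  { intros q [Sq | Yq] Hqp; [left; apply HS' | right]; auto. }
  destruct (classic (q1 = p)) as [-> | E1]; [now apply Hp_pair|].
  destruct (classic (q2 = p)) as [-> | E2].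
  - apply pair_satisfied_sym, Hp_pair; auto.
    intros [C | C]; apply Hnc; [left | right]; auto.
  - eapply pair_satisfied_mono; [ | apply Hsat; auto].
    intros r [Hr | Hr]; [left; apply Hsub | right]; auto.
Qed.

Theorem lemma6p3 (X X' Y : ptset) :
  finite_set X -> semi_permutation X ->
  obtained_by_removals X X' ->
  finite_set Y ->
  feasible X' Y ->
  (forall q, Y q -> active_row X' (py q)) ->
  feasible X Y.
Proof.
  intros _ _ Hrem _. apply clos_rt_rt1n in Hrem.
  induction Hrem as [| S S1 X' Hstep Hrem IH]; intros Hfeas HY; [assumption|].
  apply (remove_step_feasible S S1 Y Hstep); auto.
  intros q Yq. eapply active_row_mono; [ | apply HY, Yq].
  apply removals_subset, clos_rt1n_rt, Hrem.
Qed.
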